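(* Let $(\Re,\oplus,\circ)$ be a commutative Krasner hyperring with identity $1\neq 0$, let $N$ be a proper hyperideal of $\Re$, and let $\phi:L(\Re)\to L(\Re)\cup\{\emptyset\}$ be a function with $\phi(N)\subseteq N$. Then the following are equivalent: (i) $N$ is a $\phi$-primary hyperideal of $\Re$; (ii) for every $a\in\Re-\sqrt{N}$, $(N:a)=N\cup(\phi(N):a)$; (iii) for every $a\in\Re-\sqrt{N}$, $(N:a)=N$ or $(N:a)=(\phi(N):a)$; (iv) for all hyperideals $K,L$ of $\Re$ with $K\circ L\subseteq N$ and $K\circ L\not\subseteq\phi(N)$, we have $K\subseteq N$ or $L\subseteq\sqrt{N}$.
   Context: A commutative Krasner hyperring with identity is $(\Re,\oplus,\circ)$ where $(\Re,\oplus)$ is a canonical hypergroup (the hyperoperation $\oplus$ is associative and commutative; there is $0$ with $a\oplus 0=\{a\}$; each $a$ has a unique $-a$ with $0\in a\oplus(-a)$; and $c\in a\oplus b$ implies $b\in c\oplus(-a)$ and $a\in c\oplus(-b)$), $(\Re,\circ)$ is a commutative semigroup with identity $1\neq0$ and $a\circ 0=0$, and $\circ$ distributes over $\oplus$. A hyperideal is a nonempty $N\subseteq\Re$ with $a\oplus(-b)\subseteq N$ and $r\circ a\in N$ for all $a,b\in N$, $r\in\Re$; $L(\Re)$ is the set of hyperideals. For $I\in L(\Re)\cup\{\emptyset\}$ and $a\in\Re$, $(I:a)=\{x\in\Re: x\circ a\in I\}$; $\sqrt{N}=\{x\in\Re: x^n\in N\text{ for some }n\geq1\}$. For hyperideals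 $K,L$, $K\circ L$ is the hyperideal generated by $\{k\circ l\}$. ''$x\in N-\phi(N)$'' means $x\in N$, $x\notin\phi(N)$. A proper hyperideal $N$ is $\phi$-primary if for all $a,b\in\Re$, $a\circ b\in N-\phi(N)$ implies $a\in N$ or $b^k\in N$ for some $k\in\mathbb{N}$. *)

Set Implicit Arguments.

Definition subset {T : Type} (A B : T -> Prop) : Prop := forall x, A x -> B x.
Definition set_eq {T : Type} (A B : T -> Prop) : Prop := forall x, A x <-> B x.

Record KrasnerHyperring := {
  carrier :> Type;
  hadd : carrier -> carrier -> (carrier -> Prop);
  hmul : carrier -> carrier -> carrier;
  hzero : carrier;
  hone : carrier;
  hneg : carrier -> carrier;
  hadd_nonempty : forall a b, exists c, hadd a b c;
  (* associativity: (a (+) b) (+) c = a (+) (b (+) c) *)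
  hadd_assoc : forall a b c x,
      (exists y, hadd a b y /\ hadd y c x) <-> (exists y, hadd b c y /\ hadd a y x);
  hadd_comm : forall a b x, hadd a b x <-> hadd b a x;
  hadd_zero : forall a x, hadd a hzero x <-> x = a;
  hneg_spec : forall a, hadd a (hneg a) hzero;
  hneg_unique : forall a b, hadd a b hzero -> b = hneg a;
  hadd_reversible : forall a b c,
      hadd a b c -> hadd c (hneg a) b /\ hadd c (hneg b) a;
  hmul_assoc : forall a b c, hmul a (hmul b c) = hmul (hmul a b) c;
  hmul_comm : forall a b, hmul a b = hmul b a;
  hmul_one : forall a, hmul a hone = a;
  hmul_zero : forall a, hmul a hzero = hzero;
  one_neq_zero : hone <> hzero;
  (* distributivity: a o (b (+) c) = (a o b) (+) (a o c) *)
  hmul_distr : forall a b c x,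
      (exists y, hadd b c y /\ x = hmul a y) <-> hadd (hmul a b) (hmul a c) x
}.

Section Hyperideals.
Variable R : KrasnerHyperring.

Definition hyperideal (N : R -> Prop) : Prop :=
  (exists x, N x) /\
  (forall a b x, N a -> N b -> hadd R a (hneg R b) x -> N x) /\
  (forall r a, N a -> N (hmul R r a)).

Definition proper (N : R -> Prop) : Prop := exists x, ~ N x.

Fixpoint hpow (x : R) (n : nat) : R :=
  match n with
  | O => hone R
  | S n' => hmul R x (hpow x n')
  end.

Definition hrad (N : R -> Prop) : R -> Prop :=
  fun x => exists n, 1 <= n /\ N (hpow x n).

Definition hcolon (I : R -> Prop) (a : R) : R -> Prop :=
  fun x => I (hmul R x a).

(* K o L : the hyperideal generated by { k o l | k in K, l in L } *)
Definition hprod (K L : R -> Prop) : R -> Prop :=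
  fun x => forall J, hyperideal J ->
    (forall k l, K k -> L l -> J (hmul R k l)) -> J x.

Definition phi_primary (phi : (R -> Prop) -> (R -> Prop)) (N : R -> Prop) : Prop :=
  hyperideal N /\ proper N /\
  forall a b, N (hmul R a b) -> ~ phi N (hmul R a b) ->
    N a \/ exists k, 1 <= k /\ N (hpow b k).

End Hyperideals.

Arguments hyperideal {R} N.
Arguments proper {R} N.
Arguments hpow {R} x n.
Arguments hrad {R} N _.
Arguments hcolon {R} I a _.
Arguments hprod {R} K L _.
Arguments phi_primary {R} phi N.

From Stdlib Require Import Classical Lia.

(* The chain is (i) => (ii) => (iii) => (iv) => (i).  Its engine is an
   avoidance property: a hyperideal K covered by two sets I, J that are closed
   under x (+) (-y) lies in one of them, because for x in K\I and y in K\J any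
   z in x (+) y would, by reversibility, force x into I or y into J.  With
   (N:a) covered by N and (phi(N):a) this gives (ii) => (iii); with L covered by
   sqrt(N) and (phi(N):k) it gives (iii) => (iv).  Radicals are closed under
   subtraction since x^n, y^m in I and z in x (+) y give z^(n+m) in I, by
   induction on n + m through the colon hyperideals (I:x) and (I:y).  Finally
   (iv) => (i) takes K and L principal.  Only closure of phi(N) under
   subtraction is ever used, and it also holds when phi(N) is empty. *)

Section KrasnerHyperrings.
Context {R : KrasnerHyperring}.

Lemma hmul_hneg (a b : R) : hmul R a (hneg R b) = hneg R (hmul R a b).
Proof.
  apply hneg_unique. rewrite <- (hmul_zero R a).
  apply hmul_distr. exists (hzero R). split; [apply hneg_spec | reflexivity].
Qed.

Lemma hneg_involutive (a : R) : hneg R (hneg R a) = a.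
Proof. symmetry. apply hneg_unique, hadd_comm, hneg_spec. Qed.

Lemma hmul_ACA (a b c d : R) :
  hmul R (hmul R a b) (hmul R c d) = hmul R (hmul R a c) (hmul R b d).
Proof.
  rewrite <- !hmul_assoc. f_equal. rewrite !hmul_assoc. f_equal. apply hmul_comm.
Qed.

Definition hsub_closed (I : R -> Prop) : Prop :=
  forall a b x, I a -> I b -> hadd R a (hneg R b) x -> I x.

Lemma hyperideal_sub_closed {I : R -> Prop} : hyperideal I -> hsub_closed I.
Proof. intros [_ [Hsub _]]. exact Hsub. Qed.

Lemma hsub_closed_or_empty {I : R -> Prop} :
  hyperideal I \/ (forall x, ~ I x) -> hsub_closed I.
Proof.
  intros [HI | Hempty]; [exact (hyperideal_sub_closed HI) |].
  intros a b x Ha. contradiction (Hempty a Ha).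
Qed.

Lemma hyperideal_hmull {I : R -> Prop} r {a} : hyperideal I -> I a -> I (hmul R r a).
Proof. intros [_ [_ Hmul]]. apply Hmul. Qed.

Lemma hyperideal_hmulr {I : R -> Prop} {a} r : hyperideal I -> I a -> I (hmul R a r).
Proof. rewrite hmul_comm. apply hyperideal_hmull. Qed.

Lemma hyperideal_hzero {I : R -> Prop} : hyperideal I -> I (hzero R).
Proof.
  intros HI. destruct (proj1 HI) as [a Ha].
  rewrite <- (hmul_zero R a). exact (hyperideal_hmulr (hzero R) HI Ha).
Qed.

Lemma hyperideal_hneg {I : R -> Prop} {b} : hyperideal I -> I b -> I (hneg R b).
Proof.
  intros HI Hb. rewrite <- (hmul_one R b), <- hmul_hneg.
  exact (hyperideal_hmulr (hneg R (hone R)) HI Hb).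
Qed.

Lemma hyperideal_hadd {I : R -> Prop} {a b c} :
  hyperideal I -> I a -> I b -> hadd R a b c -> I c.
Proof.
  intros HI Ha Hb Hc.
  apply (hyperideal_sub_closed HI a (hneg R b) c Ha (hyperideal_hneg HI Hb)).
  rewrite hneg_involutive. exact Hc.
Qed.

Lemma hyperideal_hone_full {I : R -> Prop} x : hyperideal I -> I (hone R) -> I x.
Proof. intros HI H1. rewrite <- (hmul_one R x). exact (hyperideal_hmull x HI H1). Qed.

Lemma hyperideal_subset_union {K I J : R -> Prop} :
  hyperideal K -> hsub_closed I -> hsub_closed J ->
  subset K (fun x => I x \/ J x) -> subset K I \/ subset K J.
Proof.
  intros HK HI HJ Hcover.
  destruct (classic (subset K I)) as [| HKI]; [now left | right].
  apply not_all_ex_not in HKI as [x Hx]. apply imply_to_and in Hx as [Kx Ix].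
  intros y Ky. apply NNPP. intros Jy.
  assert (Jx : J x) by (destruct (Hcover x Kx); tauto).
  assert (Iy : I y) by (destruct (Hcover y Ky); tauto).
  destruct (hadd_nonempty R x y) as [z Hz].
  destruct (hadd_reversible R x y z Hz) as [Hzx Hzy].
  destruct (Hcover z (hyperideal_hadd HK Kx Ky Hz)) as [Iz | Jz].
  - exact (Ix (HI z y x Iz Iy Hzy)).
  - exact (Jy (HJ z x y Jz Jx Hzx)).
Qed.

Lemma hcolon_sub_closed {I : R -> Prop} c : hsub_closed I -> hsub_closed (hcolon I c).
Proof.
  intros HI u v w Hu Hv Hw. unfold hcolon in *.
  rewrite hmul_comm in Hu, Hv |- *.
  apply (HI (hmul R c u) (hmul R c v)); trivial.
  rewrite <- hmul_hneg. apply hmul_distr. exists w. split; trivial.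
Qed.

Lemma subset_hcolon {I : R -> Prop} c : hyperideal I -> subset I (hcolon I c).
Proof. intros HI x Hx. exact (hyperideal_hmulr c HI Hx). Qed.

Lemma hyperideal_hcolon {I : R -> Prop} c : hyperideal I -> hyperideal (hcolon I c).
Proof.
  intros HI. split; [| split].
  - exists (hzero R). unfold hcolon. rewrite hmul_comm, hmul_zero.
    exact (hyperideal_hzero HI).
  - exact (hcolon_sub_closed c (hyperideal_sub_closed HI)).
  - intros r a Ha. unfold hcolon in *. rewrite <- hmul_assoc.
    exact (hyperideal_hmull r HI Ha).
Qed.

Lemma hpow_hneg (y : R) m :
  hpow (hneg R y) m = hpow y m \/ hpow (hneg R y) m = hneg R (hpow y m).
Proof.
  induction m as [| m [E | E]]; simpl; [now left | rewrite E .. ].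
  - right. rewrite hmul_comm, hmul_hneg, hmul_comm. reflexivity.
  - left. rewrite hmul_hneg, hmul_comm, hmul_hneg, hneg_involutive, hmul_comm.
    reflexivity.
Qed.

Lemma hpow_hadd_mem {I : R -> Prop} {x y z : R} n m :
  hyperideal I -> hadd R x y z ->
  I (hpow x n) -> I (hpow y m) -> I (hpow z (n + m)).
Proof.
  intros HI Hz Hx Hy. remember (n + m) as s eqn:Hs.
  revert I n m Hs HI Hx Hy.
  induction s as [| s IH]; intros I n m Hs HI Hx Hy.
  - assert (n = 0) by lia. subst n. exact (hyperideal_hone_full _ HI Hx).
  - destruct n as [| n]; [exact (hyperideal_hone_full _ HI Hx) |].
    destruct m as [| m]; [exact (hyperideal_hone_full _ HI Hy) |].
    assert (Hzx : hcolon I x (hpow z s)).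
    { apply (IH _ n (S m)); [lia | apply hyperideal_hcolon, HI | |].
      - unfold hcolon. rewrite hmul_comm. exact Hx.
      - exact (subset_hcolon x HI _ Hy). }
    assert (Hzy : hcolon I y (hpow z s)).
    { apply (IH _ (S n) m); [lia | apply hyperideal_hcolon, HI | |].
      - exact (subset_hcolon y HI _ Hx).
      - unfold hcolon. rewrite hmul_comm. exact Hy. }
    simpl. rewrite hmul_comm.
    apply (hyperideal_hadd HI Hzx Hzy). apply hmul_distr. exists z. split; trivial.
Qed.

Lemma hrad_sub_closed {N : R -> Prop} : hyperideal N -> hsub_closed (hrad N).
Proof.
  intros HN x y z [n [Hn Hx]] [m [Hm Hy]] Hz.
  exists (n + m). split; [lia |].
  apply (hpow_hadd_mem n m HN Hz Hx).
  destruct (hpow_hneg y m) as [E | E]; rewrite E;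
    [exact Hy | exact (hyperideal_hneg HN Hy)].
Qed.

Lemma hprod_hmul {K L : R -> Prop} {k l} : K k -> L l -> hprod K L (hmul R k l).
Proof. intros Hk Hl J _ Hgen. exact (Hgen k l Hk Hl). Qed.

Lemma hprod_least {K L J : R -> Prop} :
  hyperideal J -> (forall k l, K k -> L l -> J (hmul R k l)) -> subset (hprod K L) J.
Proof. intros HJ Hgen x Hx. exact (Hx J HJ Hgen). Qed.

Definition hprincipal (a : R) : R -> Prop := fun x => exists r, x = hmul R r a.

Lemma hprincipal_self (a : R) : hprincipal a a.
Proof. exists (hone R). rewrite hmul_comm, hmul_one. reflexivity. Qed.

Lemma hyperideal_hprincipal (a : R) : hyperideal (hprincipal a).
Proof.
  split; [| split].
  - exists a. apply hprincipal_self.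
  - intros x y w [r ->] [s ->] Hw.
    rewrite (hmul_comm R r a), (hmul_comm R s a), <- hmul_hneg in Hw.
    destruct (proj2 (hmul_distr R a r (hneg R s) w) Hw) as [t [_ ->]].
    exists t. apply hmul_comm.
  - intros r x [s ->]. exists (hmul R r s). apply hmul_assoc.
Qed.

Lemma hprod_hprincipal {I : R -> Prop} {a b} :
  hyperideal I -> I (hmul R a b) -> subset (hprod (hprincipal a) (hprincipal b)) I.
Proof.
  intros HI Hab. apply (hprod_least HI). intros k l [r ->] [s ->].
  rewrite hmul_ACA. exact (hyperideal_hmull (hmul R r s) HI Hab).
Qed.

End KrasnerHyperrings.

Section PhiPrimary.
Context {R : KrasnerHyperring} {N : R -> Prop} {phi : (R -> Prop) -> (R -> Prop)}.
Hypotheses (hN : hyperideal N) (pN : proper N) (phiN : subset (phi N) N).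
Hypothesis hphiN : hyperideal (phi N) \/ (forall x, ~ phi N x).

Let phiN_sub_closed : hsub_closed (phi N) := hsub_closed_or_empty hphiN.

Lemma phi_primary_hcolon_union :
  phi_primary phi N -> forall a, ~ hrad N a ->
  set_eq (hcolon N a) (fun x => N x \/ hcolon (phi N) a x).
Proof.
  intros [_ [_ Hprim]] a Ha x. split.
  - intros Hxa.
    destruct (classic (phi N (hmul R x a))) as [| Hphi]; [now right | left].
    destruct (Hprim x a Hxa Hphi) as [| Hpow]; [assumption | contradiction (Ha Hpow)].
  - intros [Hx | Hx]; [exact (subset_hcolon a hN _ Hx) | exact (phiN _ Hx)].
Qed.

Lemma hcolon_union_cases :
  (forall a, ~ hrad N a -> set_eq (hcolon N a) (fun x => N x \/ hcolon (phi N) a x)) ->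
  forall a, ~ hrad N a ->
  set_eq (hcolon N a) N \/ set_eq (hcolon N a) (hcolon (phi N) a).
Proof.
  intros Hunion a Ha.
  assert (Hcover : subset (hcolon N a) (fun x => N x \/ hcolon (phi N) a x))
    by (intros x; apply Hunion, Ha).
  destruct (hyperideal_subset_union (hyperideal_hcolon a hN) (hyperideal_sub_closed hN)
              (hcolon_sub_closed a phiN_sub_closed) Hcover) as [HsubN | Hsubphi].
  - left. intros x. split; [apply HsubN | apply (subset_hcolon a hN)].
  - right. intros x. split; [apply Hsubphi | intros Hx; exact (phiN _ Hx)].
Qed.

Lemma hcolon_cases_hprod :
  (forall a, ~ hrad N a ->
     set_eq (hcolon N a) N \/ set_eq (hcolon N a) (hcolon (phi N) a)) ->
  forall K L, hyperideal K -> hyperideal L ->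
  subset (hprod K L) N -> ~ subset (hprod K L) (phi N) ->
  subset K N \/ subset L (hrad N).
Proof.
  intros Hcases K L HK HL HKL_N HKL_phi.
  destruct (classic (subset K N)) as [| HKN]; [now left | right].
  assert (K_phi : forall l, L l -> ~ hrad N l -> subset K (hcolon (phi N) l)).
  { intros l Hl Hrad. destruct (Hcases l Hrad) as [E | E].
    - exfalso. apply HKN. intros k Hk. apply E, HKL_N, (hprod_hmul Hk Hl).
    - intros k Hk. apply E, HKL_N, (hprod_hmul Hk Hl). }
  destruct (classic (subset L (hrad N))) as [| HLrad]; [assumption | exfalso].
  assert (KL_phi : forall k l, K k -> L l -> phi N (hmul R k l)).
  { intros k l Hk Hl.
    assert (Hcover : subset L (fun y => hrad N y \/ hcolon (phi N) k y)).
    { intros y Hy. destruct (classic (hrad N y)) as [| Hy']; [now left | right].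
      unfold hcolon. rewrite hmul_comm. exact (K_phi y Hy Hy' k Hk). }
    destruct (hyperideal_subset_union HL (hrad_sub_closed hN)
                (hcolon_sub_closed k phiN_sub_closed) Hcover) as [| HLk];
      [contradiction |].
    specialize (HLk l Hl). unfold hcolon in HLk. rewrite hmul_comm. exact HLk. }
  apply HKL_phi. destruct hphiN as [Hphi | Hempty].
  - exact (hprod_least Hphi KL_phi).
  - destruct HK as [[k0 Hk0] _], HL as [[l0 Hl0] _].
    contradiction (Hempty _ (KL_phi k0 l0 Hk0 Hl0)).
Qed.

Lemma hprod_phi_primary :
  (forall K L, hyperideal K -> hyperideal L ->
     subset (hprod K L) N -> ~ subset (hprod K L) (phi N) ->
     subset K N \/ subset L (hrad N)) ->
  phi_primary phi N.
Proof.
  intros Hprod. split; [exact hN | split; [exact pN |]].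
  intros a b Hab Hphi.
  destruct (Hprod (hprincipal a) (hprincipal b)
              (hyperideal_hprincipal a) (hyperideal_hprincipal b)) as [Ha | Hb].
  - exact (hprod_hprincipal hN Hab).
  - intros Hsub. apply Hphi, Hsub, hprod_hmul; apply hprincipal_self.
  - left. apply Ha, hprincipal_self.
  - right. apply Hb, hprincipal_self.
Qed.

End PhiPrimary.

Theorem mainTheorem2 (R : KrasnerHyperring) (N : R -> Prop)
    (phi : (R -> Prop) -> (R -> Prop))
    (hN : hyperideal N) (pN : proper N)
    (hphi : forall I, hyperideal I -> hyperideal (phi I) \/ (forall x, ~ phi I x))
    (phiN : subset (phi N) N) :
  (phi_primary phi N <->
     (forall a, ~ hrad N a ->
        set_eq (hcolon N a) (fun x => N x \/ hcolon (phi N) a x))) /\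
  (phi_primary phi N <->
     (forall a, ~ hrad N a ->
        set_eq (hcolon N a) N \/ set_eq (hcolon N a) (hcolon (phi N) a))) /\
  (phi_primary phi N <->
     (forall K L, hyperideal K -> hyperideal L ->
        subset (hprod K L) N -> ~ subset (hprod K L) (phi N) ->
        subset K N \/ subset L (hrad N))).
Proof.
  pose proof (phi_primary_hcolon_union hN phiN) as i_ii.
  pose proof (hcolon_union_cases hN phiN (hphi N hN)) as ii_iii.
  pose proof (hcolon_cases_hprod hN (hphi N hN)) as iii_iv.
  pose proof (hprod_phi_primary (phi := phi) hN pN) as iv_i.
  tauto.
Qed.
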